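(* Under the hypotheses of Proposition 5.1, let $(\bar u,\bar v)$ be the branch of stationary solutions given there. Then for $\alpha>\alpha_0$ with $\alpha-\alpha_0$ small enough: in case (PBC), $\bar u>0$ and $\bar v>0$ on $[0,1]$; in case (DBC), $\bar u>0$ on $(0,1]$ and $\bar v>0$ on $[0,1)$.
   Context: System (S): $\partial_t u+\partial_x(c(x)u)=\frac{\alpha v}{1+u+v}-u$, $\partial_t v-\partial_x(c(x)v)=\frac{\alpha u}{1+u+v}-v$ on $[0,1]$, $c\in\mathcal C([0,1])$ with $0<\underline c\le c\le\overline c$. Boundary conditions (DBC) $u(0)=0,v(1)=0$ or (PBC) $u(0)=u(1),v(0)=v(1)$. Proposition 5.1: with $\alpha_0=1$ for (PBC) and $\alpha_0=1/|\cos b_0|$ for (DBC), where $b_0\in(\pi/2,\pi)$ is the smallest positive root of $Cb+\tan b=0$, $\frac1C=\int_0^1dx/c$, there is $\alpha_1>\alpha_0$ and a smooth branch $\alpha\mapsto(\bar u,\bar v)\in\mathcal C([0,1])^2$, $\alpha\in[\alpha_0,\alpha_1)$, of stationary solutions with $(\bar u,\bar v)(\alpha_0)=0$ and $\alpha$-derivative at $\alpha_0$ equal to $\frac{\kappa_1C}{\kappa_2c(x)}(\tilde U,\tilde V)(C\int_0^xdy/c)$ where $\kappa_1,\kappa_2>0$, $(\tilde U,\tilde V)=(1,1)$ for (PBC) and $(\tilde U,\tilde V)(X)=(\sin(b_0X),\sin(b_0(1-X)))$ for (DBC). *)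

From Stdlib Require Import Reals Lra.
Open Scope R_scope.

Inductive bc := DBC | PBC.

Definition cont01 (f : R -> R) (x : R) : Prop :=
  forall eps, 0 < eps -> exists eta, 0 < eta /\
    forall y, 0 <= y <= 1 -> Rabs (y - x) < eta -> Rabs (f y - f x) < eps.

Definition deriv01 (f : R -> R) (x l : R) : Prop :=
  forall eps, 0 < eps -> exists eta, 0 < eta /\
    forall y, 0 <= y <= 1 -> y <> x -> Rabs (y - x) < eta ->
      Rabs ((f y - f x) / (y - x) - l) < eps.

Definition stationary (c : R -> R) (alpha : R) (u v : R -> R) : Prop :=
  (forall x, 0 <= x <= 1 -> cont01 u x /\ cont01 v x) /\
  (forall x, 0 <= x <= 1 ->
     deriv01 (fun y => c y * u y) x (alpha * v x / (1 + u x + v x) - u x) /\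
     deriv01 (fun y => c y * v y) x (- (alpha * u x / (1 + u x + v x) - v x))).

Definition boundary (b : bc) (u v : R -> R) : Prop :=
  match b with
  | DBC => u 0 = 0 /\ v 1 = 0
  | PBC => u 0 = u 1 /\ v 0 = v 1
  end.

(* b is a root of  C b + tan b = 0  (tan defined, i.e. cos b <> 0) *)
Definition is_root (C b : R) : Prop := cos b <> 0 /\ C * b + tan b = 0.

Definition smallest_pos_root (C b0 : R) : Prop :=
  0 < b0 /\ is_root C b0 /\ (forall b, 0 < b < b0 -> ~ is_root C b).

Definition alpha0 (b : bc) (b0 : R) : R :=
  match b with
  | PBC => 1
  | DBC => 1 / Rabs (cos b0)
  end.

Definition Utilde (b : bc) (b0 X : R) : R :=
  match b with PBC => 1 | DBC => sin (b0 * X) end.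
Definition Vtilde (b : bc) (b0 X : R) : R :=
  match b with PBC => 1 | DBC => sin (b0 * (1 - X)) end.

(* F has derivative dF at a (as a map R -> C([0,1]) with the sup norm),
   the increments being taken within the parameter interval [a0, a1). *)
Definition sup_deriv (a0 a1 : R) (F : R -> R -> R) (a : R) (dF : R -> R) : Prop :=
  forall eps, 0 < eps -> exists eta, 0 < eta /\
    forall h, h <> 0 -> Rabs h < eta -> a0 <= a + h < a1 ->
      forall x, 0 <= x <= 1 -> Rabs ((F (a + h) x - F a x) / h - dF x) <= eps.

Definition sup_cont (a0 a1 : R) (G : R -> R -> R) (a : R) : Prop :=
  forall eps, 0 < eps -> exists eta, 0 < eta /\
    forall a', a0 <= a' < a1 -> Rabs (a' - a) < eta ->
      forall x, 0 <= x <= 1 -> Rabs (G a' x - G a x) <= eps.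

(* Write h = alpha - alpha0. Since the branch vanishes at alpha0 and is differentiable there
   uniformly in x, ubar = h (du0 + o(1)) and vbar = h (dv0 + o(1)) uniformly on [0,1], where
   (du0, dv0) is the explicit tangent. With periodic conditions the tangent is bounded below
   by a positive constant and we are done. With Dirichlet conditions du0 vanishes at x = 0,
   so this only controls ubar away from 0. Near x = 0, however, dv0 is of order one while du0
   is small, so with alpha >= alpha0 >= 1 the reaction term alpha v / (1 + u + v) - u is
   positive; it is the derivative of c ubar, which therefore increases from its boundary value
   0. The same argument at x = 1 gives vbar > 0 near 1. *)

From Stdlib Require Import Reals Lra.
From Coquelicot Require Import Coquelicot.
Open Scope R_scope.

(* Composing with [clamp01] extends a function on [0,1] by constants: the one-sided data of
   [deriv01] become two-sided, so the mean value theorem of Coquelicot applies. *)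
Definition clamp01 (y : R) : R := Rmax 0 (Rmin 1 y).

Lemma clamp01_id y : 0 <= y <= 1 -> clamp01 y = y.
Proof.
  intros Hy; unfold clamp01.
  rewrite Rmin_right by lra; rewrite Rmax_right; lra.
Qed.

Lemma clamp01_bounds y : 0 <= clamp01 y <= 1.
Proof.
  unfold clamp01; split; [apply Rmax_l|].
  apply Rmax_lub; [lra | apply Rmin_l].
Qed.

Lemma clamp01_lipschitz x y : Rabs (clamp01 y - clamp01 x) <= Rabs (y - x).
Proof.
  unfold clamp01, Rmax, Rmin.
  repeat destruct Rle_dec; split_Rabs; lra.
Qed.

Lemma deriv01_cont01 f x l : deriv01 f x l -> cont01 f x.
Proof.
  intros Hd eps Heps.
  destruct (Hd 1 Rlt_0_1) as [eta [Heta Hq]].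
  assert (Hl : 0 < Rabs l + 1) by (pose proof (Rabs_pos l); lra).
  exists (Rmin eta (eps / (Rabs l + 1))); split.
  { apply Rmin_pos; [lra | apply Rdiv_lt_0_compat; lra]. }
  intros y Hy Hyx.
  destruct (Req_dec y x) as [-> | Hne].
  { rewrite Rminus_diag, Rabs_R0; lra. }
  pose proof (Rmin_l eta (eps / (Rabs l + 1))).
  pose proof (Rmin_r eta (eps / (Rabs l + 1))).
  specialize (Hq y Hy Hne ltac:(lra)).
  assert (Hslope : Rabs ((f y - f x) / (y - x)) <= Rabs l + 1).
  { pose proof (Rabs_triang ((f y - f x) / (y - x) - l) l).
    replace ((f y - f x) / (y - x) - l + l) with ((f y - f x) / (y - x)) in * by ring.
    lra. }
  replace (f y - f x) with ((f y - f x) / (y - x) * (y - x)) by (field; lra).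
  rewrite Rabs_mult.
  apply Rle_lt_trans with ((Rabs l + 1) * Rabs (y - x)).
  { apply Rmult_le_compat_r; [apply Rabs_pos | exact Hslope]. }
  replace eps with ((Rabs l + 1) * (eps / (Rabs l + 1))) by (field; lra).
  apply Rmult_lt_compat_l; lra.
Qed.

Lemma continuity_pt_clamp01 f x :
  0 <= x <= 1 -> cont01 f x -> continuity_pt (fun y => f (clamp01 y)) x.
Proof.
  intros Hx Hf eps Heps.
  destruct (Hf eps Heps) as [eta [Heta Hclose]].
  exists eta; split; [lra|].
  intros y [_ Hy]; simpl in *; unfold R_dist in *.
  rewrite (clamp01_id x Hx).
  apply Hclose; [apply clamp01_bounds|].
  rewrite <- (clamp01_id x Hx) at 1.
  eapply Rle_lt_trans; [apply clamp01_lipschitz | exact Hy].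
Qed.

Lemma deriv01_derivable_clamp01 f x l :
  0 < x < 1 -> deriv01 f x l -> derivable_pt_lim (fun y => f (clamp01 y)) x l.
Proof.
  intros Hx Hd eps Heps.
  destruct (Hd eps Heps) as [eta [Heta Hq]].
  assert (Hdelta : 0 < Rmin eta (Rmin x (1 - x))) by (repeat apply Rmin_pos; lra).
  exists (mkposreal _ Hdelta); intros h Hh Hsmall; simpl in Hsmall.
  pose proof (Rmin_l eta (Rmin x (1 - x))).
  pose proof (Rmin_r eta (Rmin x (1 - x))).
  pose proof (Rmin_l x (1 - x)). pose proof (Rmin_r x (1 - x)).
  assert (Hxh : 0 <= x + h <= 1) by (split_Rabs; lra).
  rewrite !clamp01_id by lra.
  replace h with (x + h - x) at 2 by ring.
  apply Hq; [exact Hxh | lra | replace (x + h - x) with h by ring; lra].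
Qed.

Lemma deriv01_MVT f df p q :
  0 <= p -> p < q -> q <= 1 ->
  (forall x, p <= x <= q -> deriv01 f x (df x)) ->
  exists xi, p <= xi <= q /\ f q - f p = df xi * (q - p).
Proof.
  intros Hp Hpq Hq Hd.
  destruct (MVT_gen (fun y => f (clamp01 y)) p q df) as [xi [Hxi Hmvt]].
  - rewrite Rmin_left, Rmax_right by lra; intros x Hx.
    apply is_derive_Reals, deriv01_derivable_clamp01; [lra | apply Hd; lra].
  - rewrite Rmin_left, Rmax_right by lra; intros x Hx.
    apply continuity_pt_clamp01; [lra|]. apply (deriv01_cont01 _ _ (df x)), Hd; lra.
  - rewrite Rmin_left, Rmax_right in Hxi by lra.
    exists xi; split; [exact Hxi|]. rewrite !clamp01_id in Hmvt by lra. exact Hmvt.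
Qed.

Lemma deriv01_increasing f df p q :
  0 <= p -> p < q -> q <= 1 ->
  (forall x, p <= x <= q -> deriv01 f x (df x) /\ 0 < df x) -> f p < f q.
Proof.
  intros Hp Hpq Hq Hd.
  destruct (deriv01_MVT f df p q) as [xi [Hxi Hmvt]]; try (intros; apply Hd); auto.
  pose proof (proj2 (Hd xi Hxi)). nra.
Qed.

Lemma deriv01_decreasing f df p q :
  0 <= p -> p < q -> q <= 1 ->
  (forall x, p <= x <= q -> deriv01 f x (df x) /\ df x < 0) -> f q < f p.
Proof.
  intros Hp Hpq Hq Hd.
  destruct (deriv01_MVT f df p q) as [xi [Hxi Hmvt]]; try (intros; apply Hd); auto.
  pose proof (proj2 (Hd xi Hxi)). nra.
Qed.

Lemma deriv01_increment_bounds f df lo hi p q :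
  0 <= p -> p <= q -> q <= 1 ->
  (forall x, p <= x <= q -> deriv01 f x (df x) /\ lo <= df x <= hi) ->
  lo * (q - p) <= f q - f p <= hi * (q - p).
Proof.
  intros Hp Hpq Hq Hd.
  destruct (Req_dec p q) as [<- | Hne].
  { rewrite !Rminus_diag, !Rmult_0_r; lra. }
  destruct (deriv01_MVT f df p q) as [xi [Hxi Hmvt]]; try (intros; apply Hd); try lra.
  pose proof (proj2 (Hd xi Hxi)). rewrite Hmvt. split; apply Rmult_le_compat_r; lra.
Qed.

Lemma pos_after_left_zero (c w r : R -> R) x1 :
  x1 <= 1 -> (forall x, 0 <= x <= 1 -> 0 < c x) -> w 0 = 0 ->
  (forall y, 0 <= y <= x1 -> deriv01 (fun y => c y * w y) y (r y) /\ 0 < r y) ->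
  forall x, 0 < x <= x1 -> 0 < w x.
Proof.
  intros Hx1 Hc Hw0 Hd x Hx.
  assert (Hcw : c 0 * w 0 < c x * w x).
  { apply (deriv01_increasing (fun y => c y * w y) r); try lra. intros y Hy; apply Hd; lra. }
  rewrite Hw0, Rmult_0_r in Hcw. pose proof (Hc x ltac:(lra)). nra.
Qed.

Lemma pos_before_right_zero (c w r : R -> R) x2 :
  0 <= x2 -> (forall x, 0 <= x <= 1 -> 0 < c x) -> w 1 = 0 ->
  (forall y, x2 <= y <= 1 -> deriv01 (fun y => c y * w y) y (r y) /\ r y < 0) ->
  forall x, x2 <= x < 1 -> 0 < w x.
Proof.
  intros Hx2 Hc Hw1 Hd x Hx.
  assert (Hcw : c 1 * w 1 < c x * w x).
  { apply (deriv01_decreasing (fun y => c y * w y) r); try lra. intros y Hy; apply Hd; lra. }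
  rewrite Hw1, Rmult_0_r in Hcw. pose proof (Hc x ltac:(lra)). nra.
Qed.

Lemma reaction_pos a w z :
  1 <= a -> 0 < z <= 1/2 -> -1/2 <= w <= 1/2 -> 2 * w < z ->
  0 < a * z / (1 + w + z) - w.
Proof.
  intros Ha Hz Hw Hwz.
  assert (Hnum : w * (1 + w + z) < a * z).
  { destruct (Rle_lt_dec w 0); nra. }
  replace (a * z / (1 + w + z) - w) with ((a * z - w * (1 + w + z)) / (1 + w + z))
    by (field; lra).
  apply Rdiv_lt_0_compat; lra.
Qed.

Definition first_order_close (h eps : R) (d w : R -> R) : Prop :=
  forall x, 0 <= x <= 1 -> h * (d x - eps) <= w x <= h * (d x + eps).

Lemma sup_deriv_first_order a0 a1 F dF :
  (forall x, 0 <= x <= 1 -> F a0 x = 0) -> sup_deriv a0 a1 F a0 dF ->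
  forall eps, 0 < eps -> exists eta, 0 < eta /\
    forall a, a0 < a < a0 + eta -> a < a1 -> first_order_close (a - a0) eps dF (F a).
Proof.
  intros H0 Hd eps Heps.
  destruct (Hd eps Heps) as [eta [Heta Hq]].
  exists eta; split; [exact Heta|].
  intros a Ha Ha1 x Hx.
  specialize (Hq (a - a0) ltac:(lra) ltac:(rewrite Rabs_right; lra)
               ltac:(replace (a0 + (a - a0)) with a by ring; lra) x Hx).
  replace (a0 + (a - a0)) with a in Hq by ring.
  rewrite H0, Rminus_0_r in Hq by exact Hx.
  apply Rabs_le_between in Hq.
  replace (F a x) with ((a - a0) * (F a x / (a - a0))) by (field; lra).
  split; apply Rmult_le_compat_l; lra.
Qed.

Lemma first_order_close_pos h eps m d w x :
  first_order_close h eps d w -> 0 < h -> eps < m -> 0 <= x <= 1 -> m <= d x -> 0 < w x.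
Proof. intros Hw Hh Heps Hx Hd. pose proof (Hw x Hx). nra. Qed.

Lemma first_order_close_small h eps hi d w :
  first_order_close h eps d w -> 0 < h -> 0 <= eps -> h * (hi + eps) <= 1/2 ->
  (forall x, 0 <= x <= 1 -> 0 <= d x <= hi) ->
  forall x, 0 <= x <= 1 -> -1/2 <= w x <= 1/2.
Proof. intros Hw Hh Heps Hsmall Hd x Hx. pose proof (Hw x Hx). pose proof (Hd x Hx). nra. Qed.

Lemma branch_pos_of_tangent_lower_bound a0 a1 (ubar vbar : R -> R -> R) (du dv : R -> R) m :
  0 < m -> (forall x, 0 <= x <= 1 -> ubar a0 x = 0 /\ vbar a0 x = 0) ->
  sup_deriv a0 a1 ubar a0 du -> sup_deriv a0 a1 vbar a0 dv -> a0 < a1 ->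
  (forall x, 0 <= x <= 1 -> m <= du x /\ m <= dv x) ->
  exists delta, 0 < delta /\ delta <= a1 - a0 /\
    forall a, a0 < a < a0 + delta -> forall x, 0 <= x <= 1 -> 0 < ubar a x /\ 0 < vbar a x.
Proof.
  intros Hm Hzero Hdu Hdv Ha01 Hlow.
  destruct (sup_deriv_first_order _ _ _ _ (fun x Hx => proj1 (Hzero x Hx)) Hdu (m / 2)
              ltac:(lra)) as [eu [Heu Hu]].
  destruct (sup_deriv_first_order _ _ _ _ (fun x Hx => proj2 (Hzero x Hx)) Hdv (m / 2)
              ltac:(lra)) as [ev [Hev Hv]].
  exists (Rmin (Rmin eu ev) (a1 - a0)).
  pose proof (Rmin_l (Rmin eu ev) (a1 - a0)); pose proof (Rmin_r (Rmin eu ev) (a1 - a0)).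
  pose proof (Rmin_l eu ev); pose proof (Rmin_r eu ev).
  split; [repeat apply Rmin_pos; lra | split; [lra|]].
  intros a Ha x Hx. destruct (Hlow x Hx).
  split; [apply (first_order_close_pos (a - a0) (m / 2) m du) |
          apply (first_order_close_pos (a - a0) (m / 2) m dv)]; auto; try lra.
  - apply Hu; lra.
  - apply Hv; lra.
Qed.

Definition boundary_layer_profile (du dv : R -> R) (hi m m' x1 x2 : R) : Prop :=
  0 < m /\ 0 < m' /\ 0 < x1 <= 1 /\ 0 <= x2 < 1 /\
  (forall x, 0 <= x <= 1 -> 0 <= du x <= hi /\ 0 <= dv x <= hi) /\
  (forall x, 0 <= x <= x1 -> m <= dv x /\ du x <= m / 8) /\
  (forall x, x2 <= x <= 1 -> m <= du x /\ dv x <= m / 8) /\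
  (forall x, x1 <= x <= 1 -> m' <= du x) /\
  (forall x, 0 <= x <= x2 -> m' <= dv x).

Section DirichletBranch.

Variables (c : R -> R) (a0 a1 : R) (ubar vbar : R -> R -> R) (du dv : R -> R).
Variables (hi m m' x1 x2 : R).

Hypothesis Hc : forall x, 0 <= x <= 1 -> 0 < c x.
Hypothesis Ha0 : 1 <= a0.
Hypothesis Ha01 : a0 < a1.
Hypothesis Hstat : forall a, a0 <= a < a1 ->
  stationary c a (ubar a) (vbar a) /\ boundary DBC (ubar a) (vbar a).
Hypothesis Hzero : forall x, 0 <= x <= 1 -> ubar a0 x = 0 /\ vbar a0 x = 0.
Hypothesis Hdu : sup_deriv a0 a1 ubar a0 du.
Hypothesis Hdv : sup_deriv a0 a1 vbar a0 dv.
Hypothesis Hprofile : boundary_layer_profile du dv hi m m' x1 x2.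

Lemma dirichlet_layers_pos a eps :
  a0 < a < a1 -> 0 <= eps <= m / 16 ->
  first_order_close (a - a0) eps du (ubar a) ->
  first_order_close (a - a0) eps dv (vbar a) ->
  (a - a0) * (hi + eps) <= 1/2 ->
  (forall x, 0 < x <= x1 -> 0 < ubar a x) /\ (forall x, x2 <= x < 1 -> 0 < vbar a x).
Proof.
  intros Ha Heps Hu Hv Hsmall.
  destruct Hprofile as (Hm & _ & Hx1 & Hx2 & Hbnd & Hleft & Hright & _ & _).
  destruct (Hstat a ltac:(lra)) as [[_ Hode] [Hu0 Hv1]].
  assert (Hus := first_order_close_small _ _ _ _ _ Hu ltac:(lra) ltac:(lra) Hsmall
                   (fun x Hx => proj1 (Hbnd x Hx))).
  assert (Hvs := first_order_close_small _ _ _ _ _ Hv ltac:(lra) ltac:(lra) Hsmall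
                   (fun x Hx => proj2 (Hbnd x Hx))).
  split.
  - eapply (pos_after_left_zero c _ _ x1); try lra; auto.
    intros y Hy. split; [apply Hode; lra|].
    destruct (Hleft y Hy). pose proof (Hu y ltac:(lra)). pose proof (Hv y ltac:(lra)).
    pose proof (Hus y ltac:(lra)). pose proof (Hvs y ltac:(lra)).
    apply reaction_pos; nra.
  - eapply (pos_before_right_zero c _ _ x2); try lra; auto.
    intros y Hy. split; [apply Hode; lra|].
    destruct (Hright y Hy). pose proof (Hu y ltac:(lra)). pose proof (Hv y ltac:(lra)).
    pose proof (Hus y ltac:(lra)). pose proof (Hvs y ltac:(lra)).
    replace (1 + ubar a y + vbar a y) with (1 + vbar a y + ubar a y) by ring.
    enough (0 < a * ubar a y / (1 + vbar a y + ubar a y) - vbar a y) by lra.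
    apply reaction_pos; nra.
Qed.

Lemma dirichlet_branch_pos :
  exists delta, 0 < delta /\ delta <= a1 - a0 /\
    forall a, a0 < a < a0 + delta ->
      (forall x, 0 < x <= 1 -> 0 < ubar a x) /\ (forall x, 0 <= x < 1 -> 0 < vbar a x).
Proof.
  destruct Hprofile as (Hm & Hm' & Hx1 & Hx2 & Hbnd & _ & _ & Hinu & Hinv).
  set (eps := Rmin (m / 16) (m' / 2)).
  assert (Heps : 0 < eps /\ eps <= m / 16 /\ eps < m').
  { unfold eps; pose proof (Rmin_l (m / 16) (m' / 2)); pose proof (Rmin_r (m / 16) (m' / 2)).
    repeat split; try lra. apply Rmin_pos; lra. }
  assert (Hhi : 0 <= hi) by (pose proof (Hbnd 0 ltac:(lra)); lra).
  destruct (sup_deriv_first_order _ _ _ _ (fun x Hx => proj1 (Hzero x Hx)) Hdu eps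
              ltac:(lra)) as [eu [Heu Hu]].
  destruct (sup_deriv_first_order _ _ _ _ (fun x Hx => proj2 (Hzero x Hx)) Hdv eps
              ltac:(lra)) as [ev [Hev Hv]].
  set (hmax := 1 / (2 * (hi + eps))).
  assert (Hhmax : 0 < hmax) by (unfold hmax; apply Rdiv_lt_0_compat; lra).
  exists (Rmin (Rmin eu ev) (Rmin (a1 - a0) hmax)).
  pose proof (Rmin_l (Rmin eu ev) (Rmin (a1 - a0) hmax)).
  pose proof (Rmin_r (Rmin eu ev) (Rmin (a1 - a0) hmax)).
  pose proof (Rmin_l eu ev); pose proof (Rmin_r eu ev).
  pose proof (Rmin_l (a1 - a0) hmax); pose proof (Rmin_r (a1 - a0) hmax).
  split; [repeat apply Rmin_pos; lra | split; [lra|]].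
  intros a Ha.
  specialize (Hu a ltac:(lra) ltac:(lra)). specialize (Hv a ltac:(lra) ltac:(lra)).
  assert (Hsmall : (a - a0) * (hi + eps) <= 1/2).
  { replace (1/2) with (hmax * (hi + eps)) by (unfold hmax; field; lra).
    apply Rmult_le_compat_r; lra. }
  destruct (dirichlet_layers_pos a eps ltac:(lra) ltac:(lra) Hu Hv Hsmall) as [Hul Hvr].
  split; intros x Hx.
  - destruct (Rle_lt_dec x x1); [apply Hul; lra|].
    apply (first_order_close_pos (a - a0) eps m' du); try lra; auto. apply Hinu; lra.
  - destruct (Rle_lt_dec x2 x); [apply Hvr; lra|].
    apply (first_order_close_pos (a - a0) eps m' dv); try lra; auto. apply Hinv; lra.
Qed.

End DirichletBranch.

Lemma smallest_pos_root_lt_PI C b0 : 0 < C -> smallest_pos_root C b0 -> b0 < PI.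
Proof.
  intros HC [Hb0 [_ Hmin]].
  set (g := fun b => - (C * b * cos b + sin b)).
  assert (Hg : continuity g).
  { unfold g; reg. }
  assert (HPI := PI_RGT_0).
  (* [C b + tan b] already vanishes somewhere in (PI/2, PI). *)
  destruct (IVT g (PI / 2) PI Hg ltac:(lra)) as [r [Hr Hgr]].
  { unfold g. rewrite cos_PI2, sin_PI2. lra. }
  { unfold g. rewrite cos_PI, sin_PI. nra. }
  assert (Hr2 : r <> PI / 2) by (intros ->; unfold g in Hgr; rewrite cos_PI2, sin_PI2 in Hgr; lra).
  assert (HrPI : r <> PI) by (intros ->; unfold g in Hgr; rewrite cos_PI, sin_PI in Hgr; nra).
  assert (Hcos : cos r < 0) by (apply cos_lt_0; lra).
  destruct (Rlt_le_dec b0 PI) as [| Hge]; [assumption | exfalso].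
  apply (Hmin r); [lra|]. split; [lra|].
  unfold tan, g in *.
  replace (C * r + sin r / cos r) with ((C * r * cos r + sin r) / cos r) by (field; lra).
  replace (C * r * cos r + sin r) with 0 by lra. unfold Rdiv; ring.
Qed.

Definition sin_floor (b0 t : R) : R := Rmin (sin (b0 * t)) (sin b0).

Section SineMode.

Variable b0 : R.
Hypothesis Hb0 : 0 < b0 < PI.

Lemma sin_floor_pos t : 0 < t <= 1 -> 0 < sin_floor b0 t.
Proof. intros Ht; unfold sin_floor; apply Rmin_case; apply sin_gt_0; nra. Qed.

Lemma sin_floor_le t1 t : 0 < t1 <= t -> t <= 1 -> sin_floor b0 t1 <= sin (b0 * t).
Proof.
  intros Ht1 Ht; unfold sin_floor.
  destruct (Rle_lt_dec (b0 * t) (PI / 2)).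
  - eapply Rle_trans; [apply Rmin_l | apply sin_incr_1; nra].
  - eapply Rle_trans; [apply Rmin_r | apply sin_decr_1; nra].
Qed.

Lemma sine_mode_upper A hi t :
  0 <= A <= hi -> 0 <= t <= 1 ->
  0 <= A * sin (b0 * t) <= hi /\ A * sin (b0 * t) <= hi * (b0 * t).
Proof.
  intros HA Ht.
  assert (Hs0 : 0 <= sin (b0 * t)) by (apply sin_ge_0; nra).
  assert (Hs1 : sin (b0 * t) <= 1) by apply SIN_bound.
  assert (Hsx : sin (b0 * t) <= b0 * t).
  { destruct (Req_dec t 0) as [-> | Hne].
    - rewrite Rmult_0_r, sin_0; lra.
    - left; apply sin_lt_x; nra. }
  repeat split; nra.
Qed.

Lemma sine_mode_lower A lo t1 t :
  0 <= lo <= A -> 0 < t1 <= t -> t <= 1 -> lo * sin_floor b0 t1 <= A * sin (b0 * t).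
Proof.
  intros HA Ht1 Ht.
  pose proof (sin_floor_pos t1 ltac:(lra)). pose proof (sin_floor_le t1 t Ht1 Ht). nra.
Qed.

End SineMode.

Lemma small_pos_witness L e : 0 < L -> 0 < e -> exists t, 0 < t <= 1 / 2 /\ L * t <= e.
Proof.
  intros HL He. exists (Rmin (1 / 2) (e / L)).
  pose proof (Rmin_l (1 / 2) (e / L)); pose proof (Rmin_r (1 / 2) (e / L)).
  split; [split; [apply Rmin_pos; [lra | apply Rdiv_lt_0_compat; lra] | assumption]|].
  replace e with (L * (e / L)) at 2 by (field; lra). apply Rmult_le_compat_l; lra.
Qed.

Lemma bi_lipschitz_reparam_bounds (X : R -> R) k K x :
  X 0 = 0 -> X 1 = 1 -> 0 < k ->
  (forall x y, 0 <= x -> x <= y -> y <= 1 -> k * (y - x) <= X y - X x <= K * (y - x)) ->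
  0 <= x <= 1 ->
  0 <= X x <= 1 /\ k * x <= X x <= K * x /\ k * (1 - x) <= 1 - X x <= K * (1 - x).
Proof.
  intros HX0 HX1 Hk HXinc Hx.
  pose proof (HXinc 0 x ltac:(lra) ltac:(lra) ltac:(lra)).
  pose proof (HXinc x 1 ltac:(lra) ltac:(lra) ltac:(lra)).
  rewrite HX0, HX1 in *. nra.
Qed.

(* In the paper's variable [X = C P(x)] the tangent of Proposition 5.1 is a pair of sine modes. *)
Lemma sine_modes_boundary_layer_profile (A X du dv : R -> R) (lo hi b0 k K : R) :
  0 < b0 < PI -> 0 < lo -> (forall x, 0 <= x <= 1 -> lo <= A x <= hi) ->
  X 0 = 0 -> X 1 = 1 -> 0 < k ->
  (forall x y, 0 <= x -> x <= y -> y <= 1 -> k * (y - x) <= X y - X x <= K * (y - x)) ->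
  (forall x, 0 <= x <= 1 ->
     du x = A x * sin (b0 * X x) /\ dv x = A x * sin (b0 * (1 - X x))) ->
  exists m m' x1 x2, boundary_layer_profile du dv hi m m' x1 x2.
Proof.
  intros Hb0 Hlo HA HX0 HX1 Hk HXinc Hmodes.
  pose proof (fun x => bi_lipschitz_reparam_bounds X k K x HX0 HX1 Hk HXinc) as HX.
  assert (Hmono : forall x y, 0 <= x -> x <= y -> y <= 1 -> X x <= X y).
  { intros x y Hx Hxy Hy. pose proof (HXinc x y Hx Hxy Hy). nra. }
  assert (HK : 0 < K) by (pose proof (HX 1 ltac:(lra)); lra).
  assert (Hhi : 0 < hi) by (pose proof (HA 0 ltac:(lra)); lra).
  set (m := lo * sin_floor b0 (1 / 2)).
  assert (Hm : 0 < m) by (apply Rmult_lt_0_compat; [lra | apply sin_floor_pos; lra]).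
  destruct (small_pos_witness (hi * b0) (m / 8) ltac:(nra) ltac:(lra)) as [dX HdX].
  destruct (small_pos_witness K dX HK ltac:(lra)) as [x1 Hx1].
  assert (Hbounded : forall x t, 0 <= x <= 1 -> 0 <= t <= 1 -> 0 <= A x * sin (b0 * t) <= hi).
  { intros x t Hx Ht. pose proof (HA x Hx).
    apply (proj1 (sine_mode_upper b0 Hb0 (A x) hi t ltac:(lra) Ht)). }
  assert (Hlarge : forall x t, 0 <= x <= 1 -> 1 / 2 <= t <= 1 -> m <= A x * sin (b0 * t)).
  { intros x t Hx Ht. pose proof (HA x Hx). apply sine_mode_lower; lra. }
  assert (Hsmall : forall x t, 0 <= x <= 1 -> 0 <= t <= dX -> A x * sin (b0 * t) <= m / 8).
  { intros x t Hx Ht. pose proof (HA x Hx).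
    destruct (sine_mode_upper b0 Hb0 (A x) hi t ltac:(lra) ltac:(lra)) as [_ Hup]. nra. }
  pose proof (HX x1 ltac:(lra)) as HXx1. pose proof (HX (1 - x1) ltac:(lra)) as HXx2.
  replace (1 - (1 - x1)) with x1 in HXx2 by ring.
  exists m, (lo * Rmin (sin_floor b0 (X x1)) (sin_floor b0 (1 - X (1 - x1)))), x1, (1 - x1).
  split; [exact Hm|]. split.
  { apply Rmult_lt_0_compat; [lra | apply Rmin_pos; apply sin_floor_pos; nra]. }
  split; [lra|]. split; [lra|]. split; [|split; [|split; [|split]]].
  - intros x Hx; destruct (Hmodes x Hx) as [-> ->]; pose proof (HX x Hx).
    split; apply Hbounded; lra.
  - intros x Hx; destruct (Hmodes x ltac:(lra)) as [-> ->]; pose proof (HX x ltac:(lra)).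
    pose proof (Hmono x x1 ltac:(lra) ltac:(lra) ltac:(lra)).
    split; [apply Hlarge | apply Hsmall]; nra.
  - intros x Hx; destruct (Hmodes x ltac:(lra)) as [-> ->]; pose proof (HX x ltac:(lra)).
    pose proof (Hmono (1 - x1) x ltac:(lra) ltac:(lra) ltac:(lra)).
    split; [apply Hlarge | apply Hsmall]; nra.
  - intros x Hx; destruct (Hmodes x ltac:(lra)) as [-> _].
    pose proof (HA x ltac:(lra)); pose proof (HX x ltac:(lra)).
    pose proof (Hmono x1 x ltac:(lra) ltac:(lra) ltac:(lra)).
    eapply Rle_trans; [| apply (sine_mode_lower b0 Hb0 (A x) lo (X x1)); nra].
    apply Rmult_le_compat_l; [lra | apply Rmin_l].
  - intros x Hx; destruct (Hmodes x ltac:(lra)) as [_ ->].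
    pose proof (HA x ltac:(lra)); pose proof (HX x ltac:(lra)).
    pose proof (Hmono x (1 - x1) ltac:(lra) ltac:(lra) ltac:(lra)).
    eapply Rle_trans; [| apply (sine_mode_lower b0 Hb0 (A x) lo (1 - X (1 - x1))); nra].
    apply Rmult_le_compat_l; [lra | apply Rmin_r].
Qed.

Lemma normalized_primitive_increments (c P : R -> R) cl cu :
  0 < cl -> (forall x, 0 <= x <= 1 -> cl <= c x <= cu) -> P 0 = 0 ->
  (forall x, 0 <= x <= 1 -> deriv01 P x (1 / c x)) ->
  0 < P 1 /\ forall x y, 0 <= x -> x <= y -> y <= 1 ->
    1 / (cu * P 1) * (y - x) <= 1 / P 1 * P y - 1 / P 1 * P x <= 1 / (cl * P 1) * (y - x).
Proof.
  intros Hcl Hc HP0 HP'.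
  assert (Hinc : forall x y, 0 <= x -> x <= y -> y <= 1 ->
            1 / cu * (y - x) <= P y - P x <= 1 / cl * (y - x)).
  { intros x y Hx Hxy Hy. apply (deriv01_increment_bounds P (fun z => 1 / c z)); auto.
    intros z Hz. pose proof (Hc z ltac:(lra)). split; [apply HP'; lra|].
    unfold Rdiv; rewrite !Rmult_1_l. split; apply Rinv_le_contravar; lra. }
  assert (Hcu : 0 < cu) by (pose proof (Hc 0 ltac:(lra)); lra).
  assert (HP1 : 0 < P 1).
  { pose proof (Hinc 0 1 ltac:(lra) ltac:(lra) ltac:(lra)). rewrite HP0 in *.
    assert (0 < 1 / cu) by (apply Rdiv_lt_0_compat; lra). lra. }
  split; [exact HP1|].
  intros x y Hx Hxy Hy. pose proof (Hinc x y Hx Hxy Hy).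
  replace (1 / P 1 * P y - 1 / P 1 * P x) with ((P y - P x) / P 1) by (field; lra).
  replace (1 / (cu * P 1) * (y - x)) with (1 / cu * (y - x) / P 1) by (field; lra).
  replace (1 / (cl * P 1) * (y - x)) with (1 / cl * (y - x) / P 1) by (field; lra).
  split; apply Rmult_le_compat_r; try lra; left; apply Rinv_0_lt_compat; lra.
Qed.

Lemma div_mul_le_bounds k k' lo hi y :
  0 < k -> 0 < k' -> 0 < lo -> lo <= y <= hi -> k / (k' * hi) <= k / (k' * y) <= k / (k' * lo).
Proof.
  intros Hk Hk' Hlo Hy.
  split; apply Rmult_le_compat_l; try lra; apply Rinv_le_contravar; nra.
Qed.

Lemma one_le_inv_Rabs_cos t : cos t <> 0 -> 1 <= 1 / Rabs (cos t).
Proof.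
  intros Hcos. pose proof (Rabs_pos_lt _ Hcos). pose proof (COS_bound t).
  apply Rmult_le_reg_r with (Rabs (cos t)); [lra|].
  field_simplify; [split_Rabs; lra | lra].
Qed.

Theorem lemma5p2
  (b : bc) (c : R -> R) (cl cu : R)
  (Hc_cont : forall x, 0 <= x <= 1 -> cont01 c x)
  (Hcl : 0 < cl)
  (Hc_bnd : forall x, 0 <= x <= 1 -> cl <= c x <= cu)
  (* P x = int_0^x dy / c(y), C = 1 / P 1 *)
  (P : R -> R) (HP0 : P 0 = 0)
  (HP' : forall x, 0 <= x <= 1 -> deriv01 P x (1 / c x))
  (b0 : R) (Hb0 : b = DBC -> smallest_pos_root (1 / P 1) b0)
  (kappa1 kappa2 alpha1 : R) (Hk1 : 0 < kappa1) (Hk2 : 0 < kappa2)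
  (Ha1 : alpha0 b b0 < alpha1)
  (* the branch alpha |-> (ubar alpha, vbar alpha) of Proposition 5.1 *)
  (ubar vbar du dv : R -> R -> R)
  (Hstat : forall a, alpha0 b b0 <= a < alpha1 ->
     stationary c a (ubar a) (vbar a) /\ boundary b (ubar a) (vbar a))
  (Hzero : forall x, 0 <= x <= 1 -> ubar (alpha0 b b0) x = 0 /\ vbar (alpha0 b b0) x = 0)
  (Hdiff : forall a, alpha0 b b0 <= a < alpha1 ->
     sup_deriv (alpha0 b b0) alpha1 ubar a (du a) /\
     sup_deriv (alpha0 b b0) alpha1 vbar a (dv a))
  (HC1 : forall a, alpha0 b b0 <= a < alpha1 ->
     sup_cont (alpha0 b b0) alpha1 du a /\ sup_cont (alpha0 b b0) alpha1 dv a)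
  (Hder0 : forall x, 0 <= x <= 1 ->
     du (alpha0 b b0) x
       = kappa1 * (1 / P 1) / (kappa2 * c x) * Utilde b b0 ((1 / P 1) * P x) /\
     dv (alpha0 b b0) x
       = kappa1 * (1 / P 1) / (kappa2 * c x) * Vtilde b b0 ((1 / P 1) * P x)) :
  exists delta, 0 < delta /\ delta <= alpha1 - alpha0 b b0 /\
    forall a, alpha0 b b0 < a < alpha0 b b0 + delta ->
      match b with
      | PBC => forall x, 0 <= x <= 1 -> 0 < ubar a x /\ 0 < vbar a x
      | DBC => (forall x, 0 < x <= 1 -> 0 < ubar a x) /\
               (forall x, 0 <= x < 1 -> 0 < vbar a x)
      end.
Proof.
  assert (Hc : forall x, 0 <= x <= 1 -> 0 < c x) by (intros x Hx; pose proof (Hc_bnd x Hx); lra).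
  destruct (normalized_primitive_increments c P cl cu Hcl Hc_bnd HP0 HP') as [HP1 HXinc].
  assert (HA : forall x, 0 <= x <= 1 -> kappa1 * (1 / P 1) / (kappa2 * cu)
      <= kappa1 * (1 / P 1) / (kappa2 * c x) <= kappa1 * (1 / P 1) / (kappa2 * cl)).
  { intros x Hx. apply div_mul_le_bounds; auto.
    apply Rmult_lt_0_compat; [lra | apply Rdiv_lt_0_compat; lra]. }
  assert (Hlo : 0 < kappa1 * (1 / P 1) / (kappa2 * cu)).
  { pose proof (HA 0 ltac:(lra)). pose proof (Hc_bnd 0 ltac:(lra)).
    repeat apply Rdiv_lt_0_compat || apply Rmult_lt_0_compat; lra. }
  destruct (Hdiff (alpha0 b b0) ltac:(lra)) as [Hdu Hdv].
  destruct b; cbn [alpha0 Utilde Vtilde] in *.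
  - destruct (Hb0 eq_refl) as (Hb0pos & [Hcos _] & _).
    pose proof (smallest_pos_root_lt_PI (1 / P 1) b0 ltac:(apply Rdiv_lt_0_compat; lra)
                  (Hb0 eq_refl)).
    pose proof (one_le_inv_Rabs_cos b0 Hcos) as Ha0.
    assert (HX0 : 1 / P 1 * P 0 = 0) by (rewrite HP0; ring).
    assert (HX1 : 1 / P 1 * P 1 = 1) by (field; lra).
    assert (Hk : 0 < 1 / (cu * P 1)).
    { pose proof (Hc_bnd 0 ltac:(lra)). apply Rdiv_lt_0_compat; nra. }
    destruct (sine_modes_boundary_layer_profile _ _ _ _ _ _ b0 _ _ ltac:(lra) Hlo HA
                HX0 HX1 Hk HXinc Hder0) as (m & m' & x1 & x2 & Hprofile).
    exact (dirichlet_branch_pos c _ _ ubar vbar _ _ _ _ _ _ _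
             Hc Ha0 Ha1 Hstat Hzero Hdu Hdv Hprofile).
  - apply (branch_pos_of_tangent_lower_bound _ _ _ _ _ _ _ Hlo Hzero Hdu Hdv Ha1).
    intros x Hx. destruct (Hder0 x Hx) as [-> ->]. rewrite Rmult_1_r. split; apply HA, Hx.
Qed.
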